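(* Let $G$ be a profinitely rigid profinite group and $M$ a finite continuous $G$-module. Then the comparison map $\varphi^2:H^2_{\mathrm{con}}(G,M)\to H^2_{\mathrm{abs}}(G,M)$ is surjective if and only if every abstract group extension $1\to M\to H\to G\to 1$ (inducing the given action of $G$ on $M$) is of profinite type.
   Context: A profinite group is profinitely rigid if its underlying abstract group admits exactly one topology making it a profinite group. An abstract group is of profinite type if it admits such a topology. $\varphi^2$ is the natural map from continuous cohomology to the cohomology of the underlying abstract group. *)

From Stdlib Require List.
From mathcomp Require Import all_boot all_algebra.
Set Implicit Arguments.
Unset Strict Implicit.
Unset Printing Implicit Defensive.
Import GRing.Theory.
Local Open Scope ring_scope.

Record Grp := {
  gcarrier :> Type;
  gmul : gcarrier -> gcarrier -> gcarrier;
  gone : gcarrier;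
  ginv : gcarrier -> gcarrier;
  gmulA : forall x y z, gmul x (gmul y z) = gmul (gmul x y) z;
  gmul1 : forall x, gmul gone x = x;
  gmulV : forall x, gmul (ginv x) x = gone
}.

Definition is_topology (T : Type) (op : (T -> Prop) -> Prop) : Prop :=
  op (fun _ => True) /\ op (fun _ => False) /\
  (forall (I : Type) (U : I -> T -> Prop), (forall i, op (U i)) ->
     op (fun x => exists i, U i x)) /\
  (forall U V, op U -> op V -> op (fun x => U x /\ V x)).

Definition prod_open (T T' : Type) (op : (T -> Prop) -> Prop)
  (op' : (T' -> Prop) -> Prop) (W : T -> T' -> Prop) : Prop :=
  forall x y, W x y -> exists A B, op A /\ op' B /\ A x /\ B y /\
     (forall a b, A a -> B b -> W a b).

Definition compact (T : Type) (op : (T -> Prop) -> Prop) : Prop :=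
  forall (I : Type) (U : I -> T -> Prop), (forall i, op (U i)) ->
    (forall x, exists i, U i x) ->
    exists s : list I, forall x, exists i, List.In i s /\ U i x.

Definition hausdorff (T : Type) (op : (T -> Prop) -> Prop) : Prop :=
  forall x y : T, x <> y -> exists U V, op U /\ op V /\ U x /\ V y /\
    (forall z, ~ (U z /\ V z)).

Definition connected_subset (T : Type) (op : (T -> Prop) -> Prop)
  (S : T -> Prop) : Prop :=
  ~ exists U V, op U /\ op V /\ (forall x, S x -> U x \/ V x) /\
      (exists x, S x /\ U x) /\ (exists x, S x /\ V x) /\
      (forall x, ~ (S x /\ U x /\ V x)).

Definition totally_disconnected (T : Type) (op : (T -> Prop) -> Prop) : Prop :=
  forall S, connected_subset op S -> forall x y, S x -> S y -> x = y.

Definition profinite_topology (G : Grp) (op : (G -> Prop) -> Prop) : Prop :=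
  is_topology op /\ compact op /\ hausdorff op /\ totally_disconnected op /\
  (forall U, op U -> prod_open op op (fun x y => U (gmul x y))) /\
  (forall U, op U -> op (fun x => U (ginv x))).

Definition profinitely_rigid (G : Grp) (op : (G -> Prop) -> Prop) : Prop :=
  profinite_topology op /\
  forall op', profinite_topology op' -> forall U, op' U <-> op U.

Definition of_profinite_type (H : Grp) : Prop :=
  exists op : (H -> Prop) -> Prop, profinite_topology op.

Definition is_Gmodule (G : Grp) (M : finZmodType) (act : G -> M -> M) : Prop :=
  (forall g x y, act g (x + y) = act g x + act g y) /\
  (forall x, act (gone G) x = x) /\
  (forall g h x, act (gmul g h) x = act g (act h x)).

(* continuity of G x M -> M, with M discrete *)
Definition continuous_action (G : Grp) (op : (G -> Prop) -> Prop)
  (M : finZmodType) (act : G -> M -> M) : Prop :=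
  forall m m' : M, op (fun g => act g m = m').

Definition cocycle2 (G : Grp) (M : finZmodType) (act : G -> M -> M)
  (f : G -> G -> M) : Prop :=
  forall g h k, act g (f h k) - f (gmul g h) k + f g (gmul h k) - f g h = 0.

Definition coboundary1 (G : Grp) (M : finZmodType) (act : G -> M -> M)
  (c : G -> M) : G -> G -> M :=
  fun g h => act g (c h) - c (gmul g h) + c g.

(* continuous 2-cochain G x G -> M (M discrete) *)
Definition continuous_cochain2 (G : Grp) (op : (G -> Prop) -> Prop)
  (M : finZmodType) (f : G -> G -> M) : Prop :=
  forall m : M, prod_open op op (fun g h => f g h = m).

(* phi^2 : H^2_con(G,M) -> H^2_abs(G,M), [f] |-> [f], is surjective:
   every abstract 2-cocycle is cohomologous (via an abstract 1-cochain)
   to a continuous 2-cocycle. *)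
Definition phi2_surjective (G : Grp) (op : (G -> Prop) -> Prop)
  (M : finZmodType) (act : G -> M -> M) : Prop :=
  forall f : G -> G -> M, cocycle2 act f ->
    exists (f' : G -> G -> M) (c : G -> M),
      continuous_cochain2 op f' /\ cocycle2 act f' /\
      forall g h, f g h = f' g h + coboundary1 act c g h.

Definition is_extension (G : Grp) (M : finZmodType) (act : G -> M -> M)
  (H : Grp) (i : M -> H) (p : H -> G) : Prop :=
  (forall x y, i (x + y) = gmul (i x) (i y)) /\
  (forall x y, i x = i y -> x = y) /\
  (forall a b, p (gmul a b) = gmul (p a) (p b)) /\
  (forall g, exists a, p a = g) /\
  (forall a, p a = gone G <-> exists m, i m = a) /\
  (forall a m, i (act (p a) m) = gmul (gmul a (i m)) (ginv a)).

Definition every_extension_profinite_type (G : Grp) (M : finZmodType)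
  (act : G -> M -> M) : Prop :=
  forall (H : Grp) (i : M -> H) (p : H -> G),
    is_extension act i p -> of_profinite_type H.

From mathcomp Require Import all_boot all_algebra.
From Stdlib Require Import Classical ClassicalEpsilon FunctionalExtensionality PropExtensionality.
From Stdlib Require List.
Set Implicit Arguments.
Unset Strict Implicit.
Unset Printing Implicit Defensive.
Import GRing.Theory.
Local Open Scope ring_scope.

(* Forward direction: an extension [1 -> M -> H -> G -> 1] with a set-theoretic
   section [s] is isomorphic to the crossed product [M x_F G] of the factor set [F]
   of [s].  If phi^2 is surjective, [s] can be chosen with [F] continuous; then the
   product of the discrete topology of [M] with the topology of [G] makes
   [M x_F G], hence [H], a profinite group.

   Backward direction: a cocycle [f] defines the extension [M x_f G], which by
   assumption carries some profinite topology.  The quotient topology it induces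
   on [G] is again profinite, so by rigidity it is the given topology of [G].  As
   the finite normal subgroup [M] is discrete, each point of [G] has a clopen
   neighbourhood over which the projection has a continuous section; compactness
   and zero-dimensionality of [G] glue finitely many of them into a continuous
   section, whose factor set is a continuous cocycle cohomologous to [f]. *)

Local Notation "x ⋆ y" := (gmul x y) (at level 40, left associativity).

Lemma In_enum (T : finType) (x : T) : List.In x (enum T).
Proof.
have : x \in enum T by rewrite mem_enum.
elim: (enum T) => [|a s IH] //; rewrite in_cons => /orP [/eqP ->|/IH]; by [left|right].
Qed.

Section Topology.
Variables (T : Type) (op : (T -> Prop) -> Prop).

Lemma open_ext (U V : T -> Prop) : op U -> (forall x, U x <-> V x) -> op V.
Proof.
move=> oU UV; suff -> : V = U by [].
by apply: functional_extensionality => x; apply: propositional_extensionality; split => /UV.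
Qed.

Definition closed (F : T -> Prop) := op (fun x => ~ F x).
Definition clopen (C : T -> Prop) := op C /\ closed C.
Definition zero_dimensional := forall x y : T, x <> y -> exists C, clopen C /\ C x /\ ~ C y.

Lemma zero_dimensional_hausdorff : zero_dimensional -> hausdorff op.
Proof.
move=> zd x y /zd [C [[oC cC] [Cx nCy]]].
by exists C, (fun z => ~ C z); do 4 split => //; move=> z [].
Qed.

Lemma zero_dimensional_totally_disconnected : zero_dimensional -> totally_disconnected op.
Proof.
move=> zd S conS x y Sx Sy; apply: NNPP => /zd [C [[oC cC] [Cx nCy]]].
apply: conS; exists C, (fun z => ~ C z); do 2 split => //.
split; first by move=> z _; apply: classic.
split; first by exists x.
split; first by exists y.
by move=> z [_ []].
Qed.

Hypothesis top : is_topology op.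

Lemma open_setT : op (fun _ => True). Proof. by case: top. Qed.
Lemma open_set0 : op (fun _ => False). Proof. by case: top => _ []. Qed.

Lemma open_bigcup (I : Type) (U : I -> T -> Prop) :
  (forall i, op (U i)) -> op (fun x => exists i, U i x).
Proof. by case: top => _ [_ [H _]]; apply: H. Qed.

Lemma open_setI U V : op U -> op V -> op (fun x => U x /\ V x).
Proof. by case: top => _ [_ [_ H]]; apply: H. Qed.

Lemma open_setU U V : op U -> op V -> op (fun x => U x \/ V x).
Proof.
move=> oU oV; apply: (@open_ext (fun x => exists b : bool, if b then U x else V x)).
  by apply: open_bigcup => -[].
by move=> x; split => [[[] ?]|[?|?]]; by [left|right|exists true|exists false].
Qed.

Lemma open_const (P : Prop) : op (fun _ => P).
Proof.
case: (classic P) => HP; [apply: (open_ext open_setT) | apply: (open_ext open_set0)];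
  by move=> _; split.
Qed.

Lemma open_local (P : T -> Prop) :
  (forall x, P x -> exists U, op U /\ U x /\ forall y, U y -> P y) -> op P.
Proof.
move=> H; pose I := {U : T -> Prop | op U /\ forall y, U y -> P y}.
apply: (@open_ext (fun x => exists i : I, sval i x)).
  by apply: open_bigcup => -[U [oU ?]].
move=> x; split; first by case=> -[U [_ HU]] /= /HU.
by move=> /H [U [oU [Ux HU]]]; exists (exist _ U (conj oU HU)).
Qed.

Lemma open_bigcap_list (I : Type) (l : list I) (U : I -> T -> Prop) :
  (forall i, List.In i l -> op (U i)) -> op (fun x => forall i, List.In i l -> U i x).
Proof.
elim: l => [|a l IH] H.
  by apply: (open_ext open_setT) => x; split => // _ i [].
apply: (@open_ext (fun x => U a x /\ (forall i, List.In i l -> U i x))).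
  by apply: open_setI; [apply: H; left | apply: IH => i Hi; apply: H; right].
move=> x; split; first by case=> Ha Hl i [<-|/Hl].
by move=> Hx; split => [|i Hi]; apply: Hx; [left|right].
Qed.

Lemma open_bigcup_list (I : Type) (l : list I) (U : I -> T -> Prop) :
  (forall i, List.In i l -> op (U i)) -> op (fun x => exists i, List.In i l /\ U i x).
Proof.
move=> H; apply: open_local => x [i [Hi Ux]].
by exists (U i); split; [apply: H | split => // y Uy; exists i].
Qed.

Lemma closed_compl U : op U -> closed (fun x => ~ U x).
Proof. by move=> oU; apply: (open_ext oU) => x; split => [? ?|/NNPP]. Qed.

Lemma closed_setD F V : closed F -> op V -> closed (fun x => F x /\ ~ V x).
Proof.
move=> cF oV; apply: (open_ext (open_setU cF oV)) => x; split; first by case=> ? [].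
by move=> nFV; case: (classic (F x)) => Fx; [right; apply: NNPP => nV; apply: nFV|left].
Qed.

Lemma clopen_bigcap_list (I : Type) (l : list I) (C : I -> T -> Prop) :
  (forall i, List.In i l -> clopen (C i)) -> clopen (fun x => forall i, List.In i l -> C i x).
Proof.
move=> H; split; first by apply: open_bigcap_list => i /H [].
apply: (@open_ext (fun x => exists i, List.In i l /\ ~ C i x)).
  by apply: open_bigcup_list => i /H [].
move=> x; split; first by case=> i [Hi nC] Hx; apply/nC/Hx.
move=> nH; apply: NNPP => nE; apply: nH => i Hi.
by apply: NNPP => nC; apply: nE; exists i.
Qed.

Lemma clopen_bigcup_list (I : Type) (l : list I) (C : I -> T -> Prop) :
  (forall i, List.In i l -> clopen (C i)) -> clopen (fun x => exists i, List.In i l /\ C i x).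
Proof.
move=> H; split; first by apply: open_bigcup_list => i /H [].
apply: (@open_ext (fun x => forall i, List.In i l -> ~ C i x)).
  by apply: open_bigcap_list => i /H [].
by move=> x; split => [nC [i [Hi Ci]]|nE i Hi Ci]; [apply: nC Ci | apply: nE; exists i].
Qed.

Hypothesis cpt : compact op.

Lemma compact_closed (F : T -> Prop) (I : Type) (U : I -> T -> Prop) :
  closed F -> (forall i, op (U i)) -> (forall x, F x -> exists i, U i x) ->
  exists l : list I, forall x, F x -> exists i, List.In i l /\ U i x.
Proof.
move=> cF oU cov.
pose U' (o : option I) := if o is Some i then U i else fun x => ~ F x.
have [l Hl] : exists l : list (option I), forall x, exists o, List.In o l /\ U' o x.
  apply: cpt => [[]|x] //; case: (classic (F x)) => [/cov [i Ui]|nFx].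
    by exists (Some i).
  by exists None.
exists (List.flat_map (fun o => if o is Some i then i :: nil else nil) l).
move=> x Fx; have [[i|] [Hi Ui]] := Hl x; last by case: Ui.
by exists i; split => //; apply/List.in_flat_map; exists (Some i); split => //; left.
Qed.

Hypothesis hsd : hausdorff op.

Lemma separate_point_closed x F : closed F -> ~ F x ->
  exists A B, op A /\ op B /\ A x /\ (forall y, F y -> B y) /\ (forall z, ~ (A z /\ B z)).
Proof.
move=> cF nFx.
pose I := {p : (T -> Prop) * (T -> Prop) |
            op p.1 /\ op p.2 /\ p.1 x /\ forall z, ~ (p.1 z /\ p.2 z)}.
have [l Hl] : exists l : list I, forall y, F y -> exists i, List.In i l /\ (sval i).2 y.
  apply: (compact_closed cF (fun i : I => proj1 (proj2 (svalP i)))) => y Fy.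
  have /hsd [U [V [oU [oV [Ux [Vy d]]]]]] : x <> y by move=> e; apply: nFx; rewrite e.
  by exists (exist _ (U, V) (conj oU (conj oV (conj Ux d)))).
exists (fun z => forall i, List.In i l -> (sval i).1 z).
exists (fun z => exists i, List.In i l /\ (sval i).2 z).
split; first by apply: open_bigcap_list => i _; case: (svalP i).
split; first by apply: open_bigcup_list => i _; case: (svalP i) => _ [].
split; first by move=> i _; case: (svalP i) => _ [] _ [].
split => // z [HA [i [Hi HB]]].
by case: (svalP i) => _ [] _ [] _ d; apply: (d z); split => //; apply: HA.
Qed.

Lemma separate_closed_closed F K : closed F -> closed K -> (forall x, ~ (F x /\ K x)) ->
  exists A B, op A /\ op B /\ (forall x, F x -> A x) /\ (forall y, K y -> B y) /\
              (forall z, ~ (A z /\ B z)).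
Proof.
move=> cF cK dFK.
pose I := {p : (T -> Prop) * (T -> Prop) |
  op p.1 /\ op p.2 /\ (forall y, K y -> p.2 y) /\ forall z, ~ (p.1 z /\ p.2 z)}.
have [l Hl] : exists l : list I, forall y, F y -> exists i, List.In i l /\ (sval i).1 y.
  apply: (compact_closed cF (fun i : I => proj1 (svalP i))) => x Fx.
  have nKx : ~ K x by move=> Kx; apply: (dFK x).
  have [A [B [oA [oB [Ax [KB d]]]]]] := separate_point_closed cK nKx.
  by exists (exist _ (A, B) (conj oA (conj oB (conj KB d)))).
exists (fun z => exists i, List.In i l /\ (sval i).1 z).
exists (fun z => forall i, List.In i l -> (sval i).2 z).
split; first by apply: open_bigcup_list => i _; case: (svalP i).
split; first by apply: open_bigcap_list => i _; case: (svalP i) => _ [].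
split => //.
split; first by move=> y Ky i _; case: (svalP i) => _ [] _ [] /(_ y Ky).
move=> z [[i [Hi HA]] HB].
by case: (svalP i) => _ [] _ [] _ d; apply: (d z); split => //; apply: HB.
Qed.

Definition quasicomponent x z := forall C, clopen C -> C x -> C z.

Lemma closed_quasicomponent x : closed (quasicomponent x).
Proof.
apply: open_local => z nQz.
have [C [clC [Cx nCz]]] : exists C, clopen C /\ C x /\ ~ C z.
  apply: NNPP => nE; apply: nQz => C clC Cx.
  by apply: NNPP => nCz; apply: nE; exists C.
exists (fun w => ~ C w); split; first by case: clC.
by split => // w nCw Qw; exact: nCw (Qw C clC Cx).
Qed.

Lemma quasicomponent_sub_clopen x W : op W -> (forall z, quasicomponent x z -> W z) ->
  exists C, clopen C /\ C x /\ forall z, C z -> W z.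
Proof.
move=> oW QW; pose I := {C : T -> Prop | clopen C /\ C x}.
have [l Hl] : exists l : list I, forall z, ~ W z -> exists i, List.In i l /\ ~ sval i z.
  apply: (compact_closed (closed_compl oW) (fun i : I => proj2 (proj1 (svalP i)))).
  move=> z nWz; apply: NNPP => nE; apply: nWz; apply: QW => C clC Cx.
  by apply: NNPP => nCz; apply: nE; exists (exist _ C (conj clC Cx)).
exists (fun z => forall i, List.In i l -> sval i z).
split; first by apply: clopen_bigcap_list => i _; case: (svalP i).
split; first by move=> i _; case: (svalP i).
move=> z Cz; apply: NNPP => /Hl [i [Hi nCi]].
by apply/nCi/Cz.
Qed.

Lemma clopen_setI_open C U V : clopen C -> op U -> op V ->
  (forall z, C z -> U z \/ V z) -> (forall z, ~ (U z /\ V z)) -> clopen (fun z => C z /\ U z).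
Proof.
move=> [oC cC] oU oV CUV dUV; split; first exact: open_setI.
apply: (open_ext (open_setU cC oV)) => z; split.
  by case=> [nC [] //|Vz [_ Uz]]; apply: (dUV z).
move=> nD; case: (classic (C z)) => Cz; last by left.
by right; case: (CUV z Cz) => // Uz; case: nD.
Qed.

(* The separation of the closed sets [Q \ V] and [Q \ U] by disjoint open sets
   is refined, by compactness, to a clopen set containing the quasicomponent [Q]. *)
Lemma quasicomponent_sub_part x U V : op U -> op V ->
  (forall z, quasicomponent x z -> U z \/ V z) ->
  (forall z, ~ (quasicomponent x z /\ U z /\ V z)) -> U x ->
  forall z, quasicomponent x z -> ~ V z.
Proof.
move=> oU oV cov dis Ux b Qb Vb.
have cQ := closed_quasicomponent x.
have [|U' [V' [oU' [oV' [AU' [BV' d']]]]]] :=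
  separate_closed_closed (closed_setD cQ oV) (closed_setD cQ oU).
  by move=> z [[Qz nV] [_ nU]]; case: (cov z Qz).
have [C [clC [Cx CUV]]] : exists C, clopen C /\ C x /\ forall z, C z -> U' z \/ V' z.
  apply: quasicomponent_sub_clopen; first exact: open_setU.
  move=> z Qz; case: (classic (V z)) => Vz; last by left; apply: AU'.
  by right; apply: BV'; split => // Uz; apply: (dis z).
have clD := clopen_setI_open clC oU' oV' CUV d'.
have Db : C b /\ U' b.
  apply: (Qb _ clD); split => //; apply: AU'; split => [C' _ //|Vx].
  by apply: (dis x); split => [C' _ //|].
have nUb : ~ U b by move=> Ub; apply: (dis b).
by apply: (d' b); split; [case: Db | apply: BV'].
Qed.

Lemma quasicomponent_connected x : connected_subset op (quasicomponent x).
Proof.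
move=> [U [V [oU [oV [cov [[a [Qa Ua]] [[b [Qb Vb]] dis]]]]]]].
have Qxx : quasicomponent x x by [].
case: (cov x Qxx) => [Ux|Vx].
  exact: (quasicomponent_sub_part oU oV cov dis Ux Qb Vb).
apply: (quasicomponent_sub_part oV oU _ _ Vx Qa Ua).
  by move=> z /cov [?|?]; [right|left].
by move=> z [Qz [Vz Uz]]; apply: (dis z).
Qed.

Hypothesis tdc : totally_disconnected op.

Lemma compact_zero_dimensional : zero_dimensional.
Proof.
move=> x y xy; apply: NNPP => nC; apply: xy.
have Qxx : quasicomponent x x by [].
apply: (tdc (@quasicomponent_connected x) Qxx) => C clC Cx.
by apply: NNPP => nCy; apply: nC; exists C.
Qed.

Lemma clopen_nbhd x W : op W -> W x -> exists C, clopen C /\ C x /\ forall z, C z -> W z.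
Proof.
move=> oW Wx; apply: quasicomponent_sub_clopen => // z Qz.
suff <- : x = z by [].
apply: NNPP => /compact_zero_dimensional [C [clC [Cx nCz]]].
exact: nCz (Qz C clC Cx).
Qed.

End Topology.

Fixpoint first_cover (I T : Type) (C : I -> T -> Prop) (l : list I) (x : T) : option I :=
  if l is j :: l' then
    if excluded_middle_informative (C j x) then Some j else first_cover C l' x
  else None.

Lemma first_cover_mem (I T : Type) (C : I -> T -> Prop) l x j :
  first_cover C l x = Some j -> C j x.
Proof.
elim: l => [|j0 l IH] //=.
by case: excluded_middle_informative => [H [<-]|_ /IH].
Qed.

Lemma first_cover_exists (I T : Type) (C : I -> T -> Prop) l x :
  (exists j, List.In j l /\ C j x) -> exists j, first_cover C l x = Some j.
Proof.
elim: l => [|j0 l IH] [j [Hj Cj]] //=.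
case: excluded_middle_informative => H; first by exists j0.
by apply: IH; exists j; split => //; case: Hj => [e|//]; rewrite e in H.
Qed.

Lemma open_first_cover (I T : Type) (op : (T -> Prop) -> Prop) (C : I -> T -> Prop) :
  is_topology op -> (forall i, clopen op (C i)) ->
  forall l j, op (fun x => first_cover C l x = Some j).
Proof.
move=> top Cc l j; elim: l => [|j0 l IH] /=.
  by apply: (open_ext (open_set0 top)) => x; split => // [].
apply: (@open_ext _ _ (fun x => (C j0 x /\ j0 = j) \/ (~ C j0 x /\ first_cover C l x = Some j))).
  apply: (open_setU top); first exact: (open_setI top (proj1 (Cc j0)) (open_const top _)).
  exact: (open_setI top (proj2 (Cc j0)) IH).
move=> x; case: excluded_middle_informative => H /=; split.
- by case=> [[_ ->]|[]].
- by case=> e; left.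
- by case=> [[]|[]].
- by move=> e; right.
Qed.

Lemma clopen_separate_finite (T : Type) (op : (T -> Prop) -> Prop) :
  is_topology op -> zero_dimensional op ->
  forall (I J : finType) (a : I -> T) (b : J -> T), (forall i j, a i <> b j) ->
  exists C, clopen op C /\ (forall i, C (a i)) /\ (forall j, ~ C (b j)).
Proof.
move=> top zd I J a b ab.
have [C HC] := @choice _ _ _ (fun ij : I * J => zd _ _ (ab ij.1 ij.2)).
exists (fun z => forall j, List.In j (enum J) -> exists i, List.In i (enum I) /\ C (i, j) z).
split.
  apply: clopen_bigcap_list => // j _; apply: clopen_bigcup_list => // i _.
  by case: (HC (i, j)).
split; first by move=> i j _; exists i; split; [exact: In_enum | case: (HC (i, j)) => _ []].
move=> j /(_ j (In_enum j)) [i [_ Cb]].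
by case: (HC (i, j)) => _ [_ /(_ Cb)].
Qed.

Lemma open_isolating (T : Type) (op : (T -> Prop) -> Prop) :
  is_topology op -> zero_dimensional op ->
  forall (I : finType) (j : I -> T), injective j ->
  forall m, exists W, op W /\ W (j m) /\ forall k, W (j k) -> k = m.
Proof.
move=> top zd I j jinj m.
have [|C [[oC _] [Cm nC]]] :=
  @clopen_separate_finite _ _ top zd _ _
    (fun _ : unit => j m) (fun k : {k : I | k != m} => j (sval k)).
  by move=> _ [k /= km] /jinj e; rewrite e eqxx in km.
exists C; split => //; split; first exact: Cm.
move=> k Ck; apply/eqP; apply: contraT => km.
by case: (nC (exist _ k km) Ck).
Qed.

Section GroupTheory.
Variable G : Grp.
Implicit Types x y z : G.

Lemma gmulgV x : x ⋆ ginv x = gone G.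
Proof.
have e : ginv (ginv x) ⋆ ginv x = gone G by apply: gmulV.
by rewrite -[x ⋆ _]gmul1 -e -gmulA [ginv x ⋆ (x ⋆ _)]gmulA gmulV gmul1.
Qed.

Lemma gmulg1 x : x ⋆ gone G = x.
Proof. by rewrite -(gmulV x) gmulA gmulgV gmul1. Qed.

Lemma gmulKg x y : ginv x ⋆ (x ⋆ y) = y.
Proof. by rewrite gmulA gmulV gmul1. Qed.

Lemma gmulgK x y : y ⋆ x ⋆ ginv x = y.
Proof. by rewrite -gmulA gmulgV gmulg1. Qed.

Lemma gmulgKV x y : y ⋆ ginv x ⋆ x = y.
Proof. by rewrite -gmulA gmulV gmulg1. Qed.

Lemma gmulgI x y z : x ⋆ y = x ⋆ z -> y = z.
Proof. by move=> e; rewrite -(gmulKg x y) e gmulKg. Qed.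

Lemma gmulIg x y z : y ⋆ x = z ⋆ x -> y = z.
Proof. by move=> e; rewrite -(gmulgK x y) e gmulgK. Qed.

Lemma ginv_unique x y : y ⋆ x = gone G -> ginv x = y.
Proof. by move=> e; apply: (@gmulIg x); rewrite gmulV e. Qed.

End GroupTheory.

Section Morphism.
Variables (K H : Grp) (phi : K -> H).
Hypothesis phiM : forall a b, phi (a ⋆ b) = phi a ⋆ phi b.

Lemma gmorph1 : phi (gone K) = gone H.
Proof. by apply: (@gmulgI _ (phi (gone K))); rewrite -phiM !gmulg1. Qed.

Lemma gmorphV a : phi (ginv a) = ginv (phi a).
Proof. by symmetry; apply: ginv_unique; rewrite -phiM gmulV gmorph1. Qed.

End Morphism.

Section TopologicalGroup.
Variables (G : Grp) (op : (G -> Prop) -> Prop).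

Lemma profinite_of_zero_dimensional : is_topology op -> compact op -> zero_dimensional op ->
  (forall U, op U -> prod_open op op (fun x y => U (x ⋆ y))) ->
  (forall U, op U -> op (fun x => U (ginv x))) -> profinite_topology op.
Proof.
move=> top cpt zd mulo invo; split=> //; split=> //.
split; first exact: zero_dimensional_hausdorff.
by split; first exact: zero_dimensional_totally_disconnected.
Qed.

Hypothesis pro : profinite_topology op.

Lemma profinite_is_topology : is_topology op. Proof. by case: pro. Qed.

Lemma profinite_zero_dimensional : zero_dimensional op.
Proof. by case: pro => top [cpt [hsd [tdc _]]]; apply: compact_zero_dimensional. Qed.

Lemma open_lmul a U : op U -> op (fun y => U (a ⋆ y)).
Proof.
case: pro => top [_ [_ [_ [mulo _]]]] oU; apply: open_local => // y Uy.
have [A [B [_ [oB [Aa [By AB]]]]]] := mulo U oU a y Uy.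
by exists B; do 2 split => //; move=> z Bz; apply: AB Aa Bz.
Qed.

Lemma clopen_lmul a C : clopen op C -> clopen op (fun y => C (a ⋆ y)).
Proof. by case=> oC cC; split; [exact: open_lmul | exact: (@open_lmul a (fun z => ~ C z))]. Qed.

Lemma open_ginv U : op U -> op (fun y => U (ginv y)).
Proof. by case: pro => _ [_ [_ [_ [_ invo]]]]; apply: invo. Qed.

End TopologicalGroup.

Lemma profinite_type_iso (K H : Grp) (phi : K -> H) :
  (forall a b, phi (a ⋆ b) = phi a ⋆ phi b) -> bijective phi ->
  of_profinite_type K -> of_profinite_type H.
Proof.
move=> phiM [psi phiK psiK] [tau pro].
have top := profinite_is_topology pro.
pose opH (W : H -> Prop) := tau (fun a => W (phi a)).
have opHE A : opH (fun x => A (psi x)) = tau A.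
  by rewrite /opH; congr tau; apply: functional_extensionality => a; rewrite phiK.
exists opH; apply: profinite_of_zero_dimensional.
- split; first exact: (open_setT top).
  split; first exact: (open_set0 top).
  split; first by move=> I U oU; exact: (open_bigcup top (U := fun i a => U i (phi a)) oU).
  by move=> U V oU oV; exact: (open_setI top oU oV).
- move=> I U oU cov; case: pro => _ [cpt _].
  have [l Hl] := cpt I (fun i a => U i (phi a)) oU (fun a => cov (phi a)).
  by exists l => x; have [i] := Hl (psi x); rewrite psiK; exists i.
- move=> x y xy.
  have [|C [[oC cC] [Cx nCy]]] := profinite_zero_dimensional pro (x := psi x) (y := psi y).
    by move/(can_inj psiK).
  exists (fun z => C (psi z)); split; last by [].
  by split; [rewrite opHE | rewrite /closed /= (opHE (fun a => ~ C a))].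
- move=> W oW x y Wxy.
  case: pro => _ [_ [_ [_ [mulo _]]]].
  have [|A [B [oA [oB [Ax [By AB]]]]]] := mulo _ oW (psi x) (psi y).
    by rewrite /= phiM !psiK.
  exists (fun z => A (psi z)), (fun z => B (psi z)); rewrite !opHE.
  do 4 split => //; move=> a b /AB /[apply].
  by rewrite phiM !psiK.
- move=> W oW; rewrite /opH; apply: (open_ext (open_ginv pro oW)) => a /=.
  by rewrite (gmorphV phiM).
Qed.

Section Gmodule.
Variables (G : Grp) (M : finZmodType) (act : G -> M -> M).
Hypothesis Hmod : is_Gmodule act.

Lemma actD g x y : act g (x + y) = act g x + act g y.
Proof. by case: Hmod => E _; apply: E. Qed.

Lemma act1 x : act (gone G) x = x.
Proof. by case: Hmod => _ [E _]; apply: E. Qed.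

Lemma actM g h x : act (g ⋆ h) x = act g (act h x).
Proof. by case: Hmod => _ [_ E]; apply: E. Qed.

Lemma act0 g : act g 0 = 0.
Proof. by apply: (@addrI _ (act g 0)); rewrite -actD !addr0. Qed.

Lemma actN g x : act g (- x) = - act g x.
Proof. by apply: (@addrI _ (act g x)); rewrite -actD !subrr act0. Qed.

Lemma coboundary1N (c : G -> M) g h :
  coboundary1 act (fun k => - c k) g h = - coboundary1 act c g h.
Proof. by rewrite /coboundary1 actN !opprD. Qed.

End Gmodule.

Section Extension.
Variables (G : Grp) (M : finZmodType) (act : G -> M -> M).
Variables (H : Grp) (i : M -> H) (p : H -> G).
Hypothesis ext : is_extension act i p.

Lemma ext_iD x y : i (x + y) = i x ⋆ i y.
Proof. by case: ext => E _; apply: E. Qed.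

Lemma ext_inj : injective i.
Proof. by case: ext => _ [E _]. Qed.

Lemma ext_pM a b : p (a ⋆ b) = p a ⋆ p b.
Proof. by case: ext => _ [_ [E _]]; apply: E. Qed.

Lemma ext_ker a : p a = gone G <-> exists m, i m = a.
Proof. by case: ext => _ [_ [_ [_ [E _]]]]; apply: E. Qed.

Lemma ext_pi m : p (i m) = gone G.
Proof. by apply/ext_ker; exists m. Qed.

Lemma ext_comm a m : a ⋆ i m = i (act (p a) m) ⋆ a.
Proof. by case: ext => _ [_ [_ [_ [_ E]]]]; rewrite E gmulgKV. Qed.

Lemma ext_section : exists s : G -> H, forall g, p (s g) = g.
Proof. by case: ext => _ [_ [_ [E _]]]; apply: (@choice _ _ _ E). Qed.

Definition factor_set (s : G -> H) (F : G -> G -> M) :=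
  forall g h, s g ⋆ s h = i (F g h) ⋆ s (g ⋆ h).

Variable s : G -> H.
Hypothesis sK : forall g, p (s g) = g.

Lemma ext_decomp a : exists m, a = i m ⋆ s (p a).
Proof.
have [|m e] := proj1 (ext_ker (a ⋆ ginv (s (p a)))).
  by rewrite ext_pM (gmorphV ext_pM) sK gmulgV.
by exists m; rewrite e gmulgKV.
Qed.

Lemma factor_set_exists : exists F, factor_set s F.
Proof.
have ker (gh : G * G) : exists m, i m = s gh.1 ⋆ s gh.2 ⋆ ginv (s (gh.1 ⋆ gh.2)).
  by apply/ext_ker; rewrite !ext_pM (gmorphV ext_pM) !sK gmulgV.
have [F HF] := @choice _ _ _ ker.
by exists (fun g h => F (g, h)) => g h; rewrite HF gmulgKV.
Qed.

Lemma section_cocycle F : factor_set s F -> cocycle2 act F.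
Proof.
move=> sF g h k.
have e1 : s g ⋆ s h ⋆ s k = i (F g h + F (g ⋆ h) k) ⋆ s (g ⋆ h ⋆ k).
  by rewrite sF -gmulA sF gmulA -ext_iD.
have e2 : s g ⋆ s h ⋆ s k = i (act g (F h k) + F g (h ⋆ k)) ⋆ s (g ⋆ h ⋆ k).
  by rewrite -gmulA sF gmulA ext_comm sK -gmulA sF gmulA -ext_iD gmulA.
have /gmulIg/ext_inj E : i (act g (F h k) + F g (h ⋆ k)) ⋆ s (g ⋆ h ⋆ k) =
                           i (F g h + F (g ⋆ h) k) ⋆ s (g ⋆ h ⋆ k) by rewrite -e1 -e2.
by rewrite (addrAC (act g _)) E addrK subrr.
Qed.

Lemma factor_set_mul F : factor_set s F ->
  forall m n g h, (i m ⋆ s g) ⋆ (i n ⋆ s h) = i (m + act g n + F g h) ⋆ s (g ⋆ h).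
Proof.
move=> sF m n g h; rewrite !ext_iD -[_ ⋆ i (F g h) ⋆ _]gmulA -sF !gmulA.
by rewrite -[i m ⋆ s g ⋆ i n]gmulA ext_comm sK !gmulA.
Qed.

Lemma factor_set_twist (c : G -> M) (s' : G -> H) F :
  (forall g, s' g = i (c g) ⋆ s g) -> factor_set s F ->
  factor_set s' (fun g h => F g h + coboundary1 act c g h).
Proof.
move=> s'E sF g h; rewrite !s'E (factor_set_mul sF) gmulA -ext_iD; congr (i _ ⋆ _).
by rewrite /coboundary1 (addrAC (act g _)) addrA subrK addrC (addrC (act g _)).
Qed.

End Extension.

Section CrossedProduct.
Variables (G : Grp) (M : finZmodType) (act : G -> M -> M).
Hypothesis Hmod : is_Gmodule act.
Variable f : G -> G -> M.
Hypothesis fcoc : cocycle2 act f.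

Lemma cocycleE g h k : act g (f h k) + f g (h ⋆ k) = f g h + f (g ⋆ h) k.
Proof.
have /eqP := fcoc g h k; rewrite subr_eq0 => /eqP <-.
by rewrite (addrAC (act g _)) subrK.
Qed.

Lemma cocycle_1l k : f (gone G) k = f (gone G) (gone G).
Proof.
by have := cocycleE (gone G) (gone G) k; rewrite !gmul1 (act1 Hmod) addrC => /addIr.
Qed.

Lemma cocycle_1r g : f g (gone G) = act g (f (gone G) (gone G)).
Proof. by have := cocycleE g (gone G) (gone G); rewrite !gmulg1 addrC => /addrI. Qed.

Definition cross_mul (x y : M * G) : M * G := (x.1 + act x.2 y.1 + f x.2 y.2, x.2 ⋆ y.2).
Definition cross_one : M * G := (- f (gone G) (gone G), gone G).
Definition cross_inv (x : M * G) : M * G :=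
  (- f (gone G) (gone G) - act (ginv x.2) x.1 - f (ginv x.2) x.2, ginv x.2).

Lemma cross_mulA x y z : cross_mul x (cross_mul y z) = cross_mul (cross_mul x y) z.
Proof.
case: x y z => [m g] [n h] [l k]; congr (_, _); last by rewrite /= gmulA.
rewrite /= (actM Hmod) !(actD Hmod) -!addrA; do 2 congr (_ + _).
by rewrite cocycleE addrCA.
Qed.

Lemma cross_mul1 x : cross_mul cross_one x = x.
Proof.
by case: x => m g; rewrite /cross_mul /= gmul1 (act1 Hmod) (cocycle_1l g) addrAC addNr add0r.
Qed.

Lemma cross_mulV x : cross_mul (cross_inv x) x = cross_one.
Proof. by case: x => m g; rewrite /cross_mul /= gmulV addrAC !subrK. Qed.

Definition crossed_product : Grp := {| gcarrier := (M * G)%type; gmul := cross_mul;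
  gone := cross_one; ginv := cross_inv; gmulA := cross_mulA; gmul1 := cross_mul1;
  gmulV := cross_mulV |}.

Definition cross_in (m : M) : crossed_product := (m - f (gone G) (gone G), gone G).

Lemma cross_in_mul k (a : crossed_product) : cross_in k ⋆ a = (k + a.1, a.2).
Proof.
case: a => n g; rewrite /= /cross_mul /= gmul1 (act1 Hmod) (cocycle_1l g).
by rewrite (addrAC k) subrK.
Qed.

Lemma crossed_product_extension : is_extension act cross_in (fun a : crossed_product => a.2).
Proof.
split; first by move=> x y; rewrite cross_in_mul /cross_in /= addrA.
split; first by move=> x y [] /addIr.
split; first by [].
split; first by move=> g; exists (0, g).
split.
  case=> n g /=; split => [->|[m [_ <-]]] //.
  by exists (n + f (gone G) (gone G)); rewrite /cross_in addrK.
case=> n g m; apply: (@gmulIg _ ((n, g) : crossed_product)); rewrite gmulgKV cross_in_mul /=.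
by rewrite /cross_mul /= gmulg1 (cocycle_1r g) -addrA -(actD Hmod) subrK addrC.
Qed.

Lemma cross_factor_set : factor_set cross_in (fun g => (0, g) : crossed_product) f.
Proof. by move=> g h; rewrite cross_in_mul /= /cross_mul /= (act0 Hmod) !addr0 add0r. Qed.

End CrossedProduct.

Section DiscreteProduct.
Variables (T : Type) (op : (T -> Prop) -> Prop) (M : finType).

Definition discrete_prod_open (W : M * T -> Prop) := forall m, op (fun x => W (m, x)).

Hypothesis top : is_topology op.

Lemma discrete_prod_topology : is_topology discrete_prod_open.
Proof.
split; first by move=> m; apply: open_setT.
split; first by move=> m; apply: open_set0.
split; first by move=> I U oU m; exact: (open_bigcup top (U := fun i x => U i (m, x)) (oU^~ m)).
by move=> U V oU oV m; exact: (open_setI top (oU m) (oV m)).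
Qed.

Lemma discrete_prod_open_fst (Q : M -> Prop) : discrete_prod_open (fun a => Q a.1).
Proof. by move=> m; exact: (open_const top (Q m)). Qed.

Lemma discrete_prod_open_snd (P : T -> Prop) : op P -> discrete_prod_open (fun a => P a.2).
Proof. by move=> oP m. Qed.

Lemma discrete_prod_open_sheet (m : M) (P : T -> Prop) :
  op P -> discrete_prod_open (fun a => a.1 = m /\ P a.2).
Proof.
move=> oP k; case: (classic (k = m)) => [->|km].
  by apply: (open_ext oP) => x; split => [|[]].
by apply: (open_ext (open_set0 top)) => x; split => [|[]].
Qed.

Lemma discrete_prod_compact : compact op -> compact discrete_prod_open.
Proof.
move=> cpt I U oU cov.
have [L HL] : exists L : M -> list I, forall m x, exists j, List.In j (L m) /\ U j (m, x).
  apply: (@choice _ _ (fun m L => forall x, exists j, List.In j L /\ U j (m, x))) => m.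
  exact: (cpt I (fun j x => U j (m, x)) (fun j => oU j m) (fun x => cov (m, x))).
exists (List.concat (List.map L (enum M))) => -[m x].
have [j [Hj Uj]] := HL m x; exists j; split => //.
by apply/List.in_concat; exists (L m); split => //; apply/List.in_map/In_enum.
Qed.

Lemma discrete_prod_zero_dimensional :
  zero_dimensional op -> zero_dimensional discrete_prod_open.
Proof.
move=> zd [m x] [m' x'] ne; case: (classic (m = m')) => [em|nm].
  have [|C [[oC cC] [Cx nCx']]] := zd x x'; first by move=> ex; apply: ne; rewrite em ex.
  exists (fun a => C a.2); split; last by split.
  split; first exact: discrete_prod_open_snd.
  exact: (discrete_prod_open_snd (P := fun z => ~ C z)).
exists (fun a => a.1 = m); split; last by split => // /esym.
split; first exact: (discrete_prod_open_fst (fun k => k = m)).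
exact: (discrete_prod_open_fst (fun k => k <> m)).
Qed.

End DiscreteProduct.

Section CrossedProductTopology.
Variables (G : Grp) (op : (G -> Prop) -> Prop) (M : finZmodType) (act : G -> M -> M).
Hypotheses (pro : profinite_topology op) (Hmod : is_Gmodule act) (cact : continuous_action op act).
Variable f : G -> G -> M.
Hypotheses (fcoc : cocycle2 act f) (fcont : continuous_cochain2 op f).

Local Notation E := (crossed_product Hmod fcoc).
Local Notation opE := (@discrete_prod_open G op M).

Let top := profinite_is_topology pro.
Let topE := discrete_prod_topology M top.

Lemma cross_open_mul U : opE U -> prod_open opE opE (fun x y : E => U (x ⋆ y)).
Proof.
move=> oU [m g] [n h] Umn; set k := m + act g n + f g h.
case: pro => _ [_ [_ [_ [mulo _]]]].
have [A1 [B1 [oA1 [oB1 [A1g [B1h H1]]]]]] := mulo _ (oU k) g h Umn.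
have [A2 [B2 [oA2 [oB2 [A2g [B2h H2]]]]]] := fcont (erefl (f g h)).
exists (fun a => a.1 = m /\ (A1 a.2 /\ A2 a.2 /\ act a.2 n = act g n)).
exists (fun b => b.1 = n /\ (B1 b.2 /\ B2 b.2)).
split.
  apply: (@discrete_prod_open_sheet _ _ _ top m (fun z => A1 z /\ A2 z /\ act z n = act g n)).
  by do 2!apply: (open_setI top) => //; apply: cact.
split.
  apply: (@discrete_prod_open_sheet _ _ _ top n (fun z => B1 z /\ B2 z)).
  exact: (open_setI top).
split; first by [].
split; first by [].
move=> [a1 a2] [b1 b2] [/= -> [Aa1 [Aa2 Aa3]]] [/= -> [Bb1 Bb2]].
by rewrite /= /cross_mul /= Aa3 (H2 _ _ Aa2 Bb2); apply: H1.
Qed.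

Lemma cross_open_inv U : opE U -> opE (fun x : E => U (ginv x)).
Proof.
move=> oU m; apply: (open_local top) => g Ug.
set k := - f (gone G) (gone G) - act (ginv g) m - f (ginv g) g.
have oR : op (fun z => U (k, ginv z)) := open_ginv pro (oU k).
have oA : op (fun z => act (ginv z) m = act (ginv g) m) := open_ginv pro (@cact m (act (ginv g) m)).
have [A2 [B2 [oA2 [oB2 [A2g [B2h H2]]]]]] := fcont (erefl (f (ginv g) g)).
exists (fun z => (U (k, ginv z) /\ act (ginv z) m = act (ginv g) m) /\ (B2 z /\ A2 (ginv z))).
split; first exact: (open_setI top (open_setI top oR oA) (open_setI top oB2 (open_ginv pro oA2))).
split; first by [].
move=> z [[Uz Az] [Bz Az2]].
by rewrite /= /cross_inv /= Az (H2 _ _ Az2 Bz).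
Qed.

Lemma crossed_product_profinite : profinite_topology (G := E) opE.
Proof.
case: pro => _ [cpt _]; apply: profinite_of_zero_dimensional.
- exact: topE.
- exact: discrete_prod_compact.
- exact: (discrete_prod_zero_dimensional top (profinite_zero_dimensional pro)).
- exact: cross_open_mul.
- exact: cross_open_inv.
Qed.

End CrossedProductTopology.

Lemma ext_profinite_of_crossed_product (G : Grp) (M : finZmodType) (act : G -> M -> M)
  (Hmod : is_Gmodule act) (H : Grp) (i : M -> H) (p : H -> G) (ext : is_extension act i p)
  (s : G -> H) (F : G -> G -> M) (Fcoc : cocycle2 act F) :
  (forall g, p (s g) = g) -> factor_set i s F ->
  of_profinite_type (crossed_product Hmod Fcoc) -> of_profinite_type H.
Proof.
move=> sK sF; have [c cE] := @choice _ _ _ (ext_decomp ext sK).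
apply: (@profinite_type_iso _ _ (fun x : crossed_product Hmod Fcoc => i x.1 ⋆ s x.2)).
  by move=> [m g] [n h]; rewrite (factor_set_mul ext sK sF).
exists (fun a => (c a, p a)) => [[m g]|a] /=; last by rewrite -cE.
have pE : p (i m ⋆ s g) = g by rewrite (ext_pM ext) (ext_pi ext) sK gmul1.
by rewrite pE; have := cE (i m ⋆ s g); rewrite pE => /gmulIg/(ext_inj ext) <-.
Qed.

Lemma continuous_factor_set_exists (G : Grp) (op : (G -> Prop) -> Prop) (M : finZmodType)
  (act : G -> M -> M) (Hmod : is_Gmodule act) (H : Grp) (i : M -> H) (p : H -> G) :
  phi2_surjective op act -> is_extension act i p ->
  exists s F, (forall g, p (s g) = g) /\ factor_set i s F /\
              cocycle2 act F /\ continuous_cochain2 op F.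
Proof.
move=> phi2 ext; have [s0 s0K] := ext_section ext.
have [F0 s0F] := factor_set_exists ext s0K.
have [F [c [Fcont [Fcoc F0E]]]] := phi2 _ (section_cocycle ext s0K s0F).
exists (fun g => i (- c g) ⋆ s0 g), F; split.
  by move=> g; rewrite (ext_pM ext) (ext_pi ext) s0K gmul1.
split=> // g h.
have -> : F g h = F0 g h + coboundary1 act (fun k => - c k) g h.
  by rewrite (coboundary1N Hmod) F0E addrK.
exact: (factor_set_twist ext s0K (s' := fun g => i (- c g) ⋆ s0 g) (fun g => erefl) s0F).
Qed.

Lemma ext_profinite_of_phi2_surjective (G : Grp) (op : (G -> Prop) -> Prop)
  (M : finZmodType) (act : G -> M -> M) :
  profinite_topology op -> is_Gmodule act -> continuous_action op act ->
  phi2_surjective op act -> every_extension_profinite_type act.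
Proof.
move=> pro Hmod cact phi2 H i p ext.
have [s [F [sK [sF [Fcoc Fcont]]]]] := continuous_factor_set_exists Hmod phi2 ext.
apply: (ext_profinite_of_crossed_product ext (Hmod := Hmod) (Fcoc := Fcoc) sK sF).
by exists (@discrete_prod_open _ op M); apply: crossed_product_profinite.
Qed.

Section Backward.
Variables (G : Grp) (op : (G -> Prop) -> Prop) (M : finZmodType) (act : G -> M -> M).
Hypotheses (pro : profinite_topology op)
  (rigid : forall op', profinite_topology op' -> forall U, op' U <-> op U)
  (Hmod : is_Gmodule act).
Variable f : G -> G -> M.
Hypothesis fcoc : cocycle2 act f.

Local Notation E := (crossed_product Hmod fcoc).
Local Notation iE := (cross_in Hmod fcoc).

Variable tau : (E -> Prop) -> Prop.
Hypothesis ptau : profinite_topology tau.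

Let top := profinite_is_topology pro.
Let topE := profinite_is_topology ptau.
Let ext := crossed_product_extension Hmod fcoc.

Lemma open_saturation (A : E -> Prop) : tau A -> tau (fun a : E => exists m, A (m, a.2)).
Proof.
move=> oA; have oAk k : tau (fun a => A (iE k ⋆ a)) := open_lmul ptau _ oA.
apply: (open_ext (open_bigcup topE oAk)) => a; split.
  by case=> k; rewrite cross_in_mul => Ak; exists (k + a.1).
by case=> m Am; exists (m - a.1); rewrite cross_in_mul subrK.
Qed.

Definition quotient_open (V : G -> Prop) := tau (fun a : E => V a.2).

Lemma quotient_topology : is_topology quotient_open.
Proof.
split; first exact: (open_setT topE).
split; first exact: (open_set0 topE).
split; first by move=> I U oU; exact: (open_bigcup topE (U := fun i a => U i a.2) oU).
by move=> U V oU oV; exact: (open_setI topE oU oV).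
Qed.

Lemma quotient_compact : compact quotient_open.
Proof.
move=> I U oU cov; case: ptau => _ [cpt _].
have [l Hl] := cpt I (fun j (a : E) => U j a.2) oU (fun a => cov a.2).
by exists l => g; have [j [Hj Uj]] := Hl ((0, g) : E); exists j.
Qed.

Lemma quotient_zero_dimensional : zero_dimensional quotient_open.
Proof.
move=> g g' ne.
have [|D [clD [Dg nDg']]] := @clopen_separate_finite _ _ topE (profinite_zero_dimensional ptau)
  M M (fun m => (m, g) : E) (fun m => (m, g') : E).
  by move=> m m' [_ e]; apply: ne.
have satE (a : E) : (forall k, List.In k (enum M) -> D (iE k ⋆ a)) <-> forall m, D (m, a.2).
  split => [Da m | Da k _]; last by rewrite cross_in_mul; apply: Da.
  by have := Da (m - a.1) (In_enum _); rewrite cross_in_mul subrK.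
have [oS cS] : clopen tau (fun a => forall k, List.In k (enum M) -> D (iE k ⋆ a)).
  by apply: clopen_bigcap_list => // k _; apply: clopen_lmul.
exists (fun x => forall m, D (m, x)); split; last by split => // nD; apply: (nDg' 0).
split; first by rewrite /quotient_open; apply: (open_ext oS) => a; apply: satE.
rewrite /closed /quotient_open; rewrite /closed in cS.
by apply: (open_ext cS) => a; split => nS H; apply: nS; apply/satE.
Qed.

Lemma quotient_open_mul U : quotient_open U ->
  prod_open quotient_open quotient_open (fun x y => U (x ⋆ y)).
Proof.
move=> oU g h Ugh; case: ptau => _ [_ [_ [_ [mulo _]]]].
have [A [B [oA [oB [Aa [Bb HAB]]]]]] :=
  mulo (fun a : E => U a.2) oU ((0, g) : E) ((0, h) : E) Ugh.
exists (fun g' => exists m, A (m, g')), (fun h' => exists m, B (m, h')).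
split; first exact: (open_saturation oA).
split; first exact: (open_saturation oB).
split; first by exists 0.
split; first by exists 0.
by move=> g' h' [m Am] [n Bn]; apply: (HAB _ _ Am Bn).
Qed.

Lemma quotient_profinite : profinite_topology quotient_open.
Proof.
apply: profinite_of_zero_dimensional.
- exact: quotient_topology.
- exact: quotient_compact.
- exact: quotient_zero_dimensional.
- exact: quotient_open_mul.
- by move=> U oU; exact: (open_ginv ptau oU).
Qed.

(* Rigidity is used here: the quotient topology on [G] is profinite, hence it is [op]. *)
Lemma open_image (A : E -> Prop) : tau A -> op (fun g => exists m, A (m, g)).
Proof. by move=> oA; apply/(rigid quotient_profinite); apply: open_saturation. Qed.

Definition fiber_injective (U : E -> Prop) := forall a b : E, U a -> U b -> a.2 = b.2 -> a = b.

(* [iE 0] is isolated among the finitely many points [iE m], so a neighbourhood [U]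
   with [U U^-1] close to the identity meets each fibre at most once. *)
Lemma fiber_injective_nbhd g0 : exists U, tau U /\ (exists m, U (m, g0)) /\ fiber_injective U.
Proof.
case: ptau => _ [_ [_ [_ [mulo _]]]].
have [W [oW [W0 HW]]] :=
  open_isolating topE (profinite_zero_dimensional ptau) (ext_inj ext) 0.
pose a0 : E := (0, g0).
have W1 : W (a0 ⋆ ginv a0).
  by rewrite gmulgV (_ : gone E = iE 0) // /= /cross_one /cross_in sub0r.
have [A [B [oA [oB [Aa [Bb HAB]]]]]] := mulo W oW a0 (ginv a0) W1.
exists (fun a => A a /\ B (ginv a)).
split; first exact: (open_setI topE oA (open_ginv ptau oB)).
split; first by exists 0.
move=> a b [Aa' Ba'] [Ab' Bb'] e.
have ea : a = iE (a.1 - b.1) ⋆ b by rewrite cross_in_mul subrK -e; case: (a).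
have := HAB _ _ Aa' Bb'; rewrite {1}ea gmulgK => /HW /eqP; rewrite subr_eq0 => /eqP e1.
by move: e1 e; case: (a); case: (b) => /= ? ? ? ? -> ->.
Qed.

Definition local_section (U : E -> Prop) (g : G) : M :=
  epsilon (inhabits 0) (fun m => U (m, g)).

Lemma local_sectionP U g : (exists m, U (m, g)) -> U (local_section U g, g).
Proof. exact: (epsilon_spec (inhabits 0) (fun m => U (m, g))). Qed.

Lemma open_local_section U : tau U -> fiber_injective U -> forall W, tau W ->
  op (fun g => (exists m, U (m, g)) /\ W (local_section U g, g)).
Proof.
move=> oU fU W oW; apply: (open_ext (open_image (open_setI topE oU oW))) => g; split.
  case=> m [Um Wm]; have ex : exists m, U (m, g) by exists m.
  by split => //; have [<-] := fU _ _ Um (@local_sectionP U g ex) erefl.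
by case=> ex Wl; exists (local_section U g); split => //; exact: (@local_sectionP U g ex).
Qed.

Definition section_piece := {q : (G -> Prop) * (E -> Prop) |
  clopen op q.1 /\ tau q.2 /\ fiber_injective q.2 /\ forall g, q.1 g -> exists m, q.2 (m, g)}.

Lemma section_piece_cover g0 : exists j : section_piece, (sval j).1 g0.
Proof.
have [U [oU [[m Um] fU]]] := fiber_injective_nbhd g0.
case: pro => _ [cpt [hsd [tdc _]]].
have [C [clC [Cg0 CU]]] := clopen_nbhd top cpt hsd tdc (open_image oU) (ex_intro _ m Um).
by exists (exist _ (C, U) (conj clC (conj oU (conj fU CU)))).
Qed.

Section Glue.
Variable L : list section_piece.
Hypothesis HL : forall g, exists j, List.In j L /\ (sval j).1 g.

(* Each point uses the first piece of [L] containing it; these choices are made on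
   the clopen partition [{g | first_cover _ L g = Some j}] of [G]. *)
Definition glued_coord (g : G) : M :=
  if first_cover (fun j : section_piece => (sval j).1) L g is Some j
  then local_section (sval j).2 g else 0.

Definition glued_section (g : G) : E := (glued_coord g, g).

Lemma glued_section_continuous W : tau W -> op (fun g => W (glued_section g)).
Proof.
move=> oW; apply: (open_local top) => g Wg.
have [j ej] := first_cover_exists (C := fun j : section_piece => (sval j).1) (HL g).
case: (svalP j) => clC [oU [fU cov]].
exists (fun g' => first_cover (fun j : section_piece => (sval j).1) L g' = Some j /\
   ((exists m, (sval j).2 (m, g')) /\ W (local_section (sval j).2 g', g'))).
split.
  apply: (open_setI top (open_first_cover top _ _ _) (open_local_section oU fU oW)).
  by move=> i; case: (svalP i).
split; last by move=> g' [e' [_ W']]; rewrite /glued_section /glued_coord e'.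
split => //; split; first exact/cov/(first_cover_mem ej).
by move: Wg; rewrite /glued_section /glued_coord ej.
Qed.

End Glue.

(* [F g h] is read off from [s g ⋆ s h ⋆ ginv (s (g ⋆ h))], a continuous function of
   [(g, h)] with values among the isolated points [iE m]. *)
Lemma continuous_section_factor_set (s : G -> E) F :
  (forall W, tau W -> op (fun g => W (s g))) -> factor_set iE s F -> continuous_cochain2 op F.
Proof.
move=> scont sF m g h e.
case: ptau => _ [_ [_ [_ [mulo _]]]]; case: pro => _ [_ [_ [_ [mulG _]]]].
have [W [oW [Wm HW]]] :=
  open_isolating topE (profinite_zero_dimensional ptau) (ext_inj ext) m.
have rel g' h' : s g' ⋆ s h' ⋆ ginv (s (g' ⋆ h')) = iE (F g' h') by rewrite sF gmulgK.
have W0 : W (s g ⋆ s h ⋆ ginv (s (g ⋆ h))) by rewrite rel e.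
have [A [B [oA [oB [Aa [Bb HAB]]]]]] := mulo W oW _ _ W0.
have [A1 [A2 [oA1 [oA2 [A1g [A2h H12]]]]]] := mulo A oA _ _ Aa.
have [P [Q [oP [oQ [Pg [Qh HPQ]]]]]] := mulG _ (scont _ (open_ginv ptau oB)) g h Bb.
exists (fun g' => A1 (s g') /\ P g'), (fun h' => A2 (s h') /\ Q h').
split; first exact: (open_setI top (scont _ oA1) oP).
split; first exact: (open_setI top (scont _ oA2) oQ).
split; first by split.
split; first by split.
move=> g' h' [A1' P'] [A2' Q']; apply: HW; rewrite -rel.
by apply: HAB; [apply: H12 | apply: HPQ].
Qed.

Lemma cohomologous_continuous_cocycle : exists (f' : G -> G -> M) (c : G -> M),
  continuous_cochain2 op f' /\ cocycle2 act f' /\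
  forall g h, f g h = f' g h + coboundary1 act c g h.
Proof.
have [L HL] : exists L : list section_piece, forall g, exists j, List.In j L /\ (sval j).1 g.
  case: pro => _ [cpt _]; apply: (cpt _ (fun j => (sval j).1)); last exact: section_piece_cover.
  by move=> j; case: (svalP j) => -[].
pose c := glued_coord L.
have sF : factor_set iE (glued_section L) (fun g h => f g h + coboundary1 act c g h).
  apply: (factor_set_twist ext (s := fun g => (0, g) : E)) => // [g|].
    by rewrite cross_in_mul addr0.
  exact: cross_factor_set.
exists (fun g h => f g h + coboundary1 act c g h), (fun g => - c g).
split; first exact: (continuous_section_factor_set (glued_section_continuous HL) sF).
split; first exact: (section_cocycle ext (s := fun g => glued_section L g) (fun g => erefl) sF).
by move=> g h; rewrite (coboundary1N Hmod) addrK.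
Qed.

End Backward.

Lemma phi2_surjective_of_ext_profinite (G : Grp) (op : (G -> Prop) -> Prop)
  (M : finZmodType) (act : G -> M -> M) :
  profinitely_rigid op -> is_Gmodule act ->
  every_extension_profinite_type act -> phi2_surjective op act.
Proof.
move=> [pro rigid] Hmod all f fcoc.
have [tau ptau] := all _ _ _ (crossed_product_extension Hmod fcoc).
exact: (cohomologous_continuous_cocycle pro rigid ptau).
Qed.

Theorem mainTheorem18 (G : Grp) (op : (G -> Prop) -> Prop)
  (M : finZmodType) (act : G -> M -> M) :
  profinitely_rigid op ->
  is_Gmodule act ->
  continuous_action op act ->
  (phi2_surjective op act <-> every_extension_profinite_type act).
Proof.
move=> rig Hmod cact; split.
  by apply: ext_profinite_of_phi2_surjective => //; case: rig.
exact: phi2_surjective_of_ext_profinite.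
Qed.
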